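(* Let $A$ be a subalgebra of the matrix metabelian Lie algebra $M^0_{I,\Lambda}$. Then $\mathrm{Fit}(A)$ (which is abelian) is a torsion-free module over the polynomial ring $k[x_d:d\in D]$, where the module structure is defined via a family $\{e_d:d\in D\}\subseteq A$ whose images form a basis of $A/\mathrm{Fit}(A)$ by $b\cdot x_d=b\circ e_d$.
   Context: For sets $I,\Lambda$ and a field $k$, let $R=k[x_\alpha:\alpha\in\Lambda]$ and $T$ the free $R$-module with basis $\{u_i:i\in I\}$. $M_{I,\Lambda}$ is the set of pairs $(f,u)$, $f\in R$, $u\in T$, with componentwise linear operations and product $(f,u)\circ(g,v)=(0,ug-vf)$; $M^0_{I,\Lambda}$ is its subalgebra of pairs $(f,u)$ with $f$ a $k$-linear combination of the variables $x_\alpha$ (possibly $0$). $\mathrm{Fit}(A)$ is the ideal of $A$ generated by all elements lying in nilpotent ideals of $A$. For an abelian ideal $J\supseteq A^2$ of a metabelian Lie algebra, the module action $b\cdot x_d=b\circ e_d$ extends multiplicatively and linearly to a well-defined module structure over the commutative polynomial ring. *)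

From HB Require Import structures.
From mathcomp Require Import all_boot all_order all_algebra.
From mathcomp Require Import finmap.
From mathcomp.multinomials Require Import monalg.

Set Implicit Arguments.
Unset Strict Implicit.
Unset Printing Implicit Defensive.

Import GRing.Theory.
Local Open Scope ring_scope.

Definition Rpoly (k : fieldType) (L : choiceType) := {malg k[{cmonom L}]}.

(* T = free R-module with basis {u_i : i in I} (finitely supported I -> R) *)
Definition Tmod (k : fieldType) (L I : choiceType) := {malg (Rpoly k L)[I]}.

Section Matrix.
Variables (k : fieldType) (L I : choiceType).
Local Notation R := (Rpoly k L).
Local Notation T := (Tmod k L I).

Definition Mel := (R * T)%type.

Definition Mzero : Mel := (0, 0).
Definition Madd (a b : Mel) : Mel := (a.1 + b.1, a.2 + b.2).
Definition Mopp (a : Mel) : Mel := (- a.1, - a.2).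
Definition Mscale (c : k) (a : Mel) : Mel := (c *: a.1, (c%:A : R) *: a.2).
Definition Mbr (a b : Mel) : Mel := (0, b.1 *: a.2 - a.1 *: b.2).

Definition linear_poly (f : R) : Prop :=
  forall m, m \in msupp f -> exists a : L, m = ucm a.

Definition inM0 (x : Mel) : Prop := linear_poly x.1.

Definition subspace (S : Mel -> Prop) : Prop :=
  [/\ S Mzero,
      (forall x y, S x -> S y -> S (Madd x y)) &
      (forall c x, S x -> S (Mscale c x))].

Definition subalgebraM0 (A : Mel -> Prop) : Prop :=
  [/\ subspace A,
      (forall x y, A x -> A y -> A (Mbr x y)) &
      (forall x, A x -> inM0 x)].

Definition ideal (A J : Mel -> Prop) : Prop :=
  [/\ subspace J,
      (forall x, J x -> A x) &
      (forall a x, A a -> J x -> J (Mbr a x))].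

Definition nilpotent (J : Mel -> Prop) : Prop :=
  exists n : nat, forall (xs : seq Mel) (x : Mel),
    size xs = n -> (forall y, y \in xs -> J y) -> J x ->
    foldr Mbr x xs = Mzero.

Definition Fit (A : Mel -> Prop) (x : Mel) : Prop :=
  forall K : Mel -> Prop, ideal A K ->
    (forall J, ideal A J -> nilpotent J -> forall y, J y -> K y) -> K x.

Section Family.
Variables (D : choiceType) (e : D -> Mel).

Definition lincomb (s : seq D) (c : D -> k) : Mel :=
  foldr (fun d acc => Madd (Mscale (c d) (e d)) acc) Mzero s.

Definition basis_mod_Fit (A : Mel -> Prop) : Prop :=
  [/\ (forall d, A (e d)),
      (forall (s : seq D) (c : D -> k), uniq s -> Fit A (lincomb s c) ->
          forall d, d \in s -> c d = 0) &
      (forall a, A a -> exists (s : seq D) (c : D -> k),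
          Fit A (Madd a (Mopp (lincomb s c))))].

Definition act_monom (m : {cmonom D}) (b : Mel) : Mel :=
  foldr (fun d x => iter (m d) (fun y => Mbr y (e d)) x) b (finsupp m).

Definition act (b : Mel) (p : {malg k[{cmonom D}]}) : Mel :=
  foldr (fun m acc => Madd (Mscale p@_m (act_monom m b)) acc) Mzero (msupp p).

End Family.
End Matrix.

From HB Require Import structures.
From mathcomp Require Import all_boot all_order all_algebra.
From mathcomp Require Import finmap.
From mathcomp.multinomials Require Import monalg.
From mathcomp.multinomials Require mpoly.
From Stdlib Require Import Classical.

Set Implicit Arguments.
Unset Strict Implicit.
Unset Printing Implicit Defensive.

Import GRing.Theory.

Local Open Scope ring_scope.
Local Open Scope fset_scope.

(* For a = (f, u) and z = (0, w) one has a o z = (0, - f w): the pairs with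
   zero first component ("vertical" pairs) form an abelian ideal Z of A, on
   which A acts through multiplication in the torsion-free R-module T.  Hence
   if an element y of a nilpotent ideal has y.1 <> 0, then y is central in A,
   and for all a, b in A the identity y.1 (a o b) = 0 forces a o b = 0.  So
   either A is abelian, in which case Fit(A) = A, the basis of A/Fit(A) is
   empty and the action is by scalars; or Fit(A) = A ∩ Z.  In the second case
   the first components f_d of the e_d are linearly independent linear forms
   and (0, u) . p equals (0, p(f_d) u); substituting independent linear forms
   is injective, since a linear map sending each f_d back to x_d induces a
   left inverse, so (0, u) . p <> 0 for u <> 0 and p <> 0. *)

(* Renaming the finitely many variables of S as 1..n embeds the polynomials
   with variables in S into the integral domain {mpoly R[n]}. *)
Section MalgDomain.
Import mpoly.
Variables (R : idomainType) (L : choiceType) (S : {fset L}).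

Let s := in_tuple (enum_fset S).

Definition rename_cmonom (m : {cmonom L}) : 'X_{1..size s} :=
  [multinom m (tnth s i) | i < size s].

Lemma rename_cmonom_inj :
  {in [pred m : {cmonom L} | finsupp m `<=` S] &, injective rename_cmonom}.
Proof.
move=> m1 m2 /fsubsetP sub1 /fsubsetP sub2 /mnmP eq12; apply/eqP/cmP => a.
have [aS | aNS] := boolP (a \in S).
  have /tnthP[i ->] : a \in (s : seq L) by [].
  by have := eq12 i; rewrite !mnmE.
have m1a : m1 a = 0%N by apply/eqP; rewrite cmE_eq0; apply: contra aNS; apply: sub1.
have m2a : m2 a = 0%N by apply/eqP; rewrite cmE_eq0; apply: contra aNS; apply: sub2.
by rewrite m1a m2a.
Qed.

Definition monom_rename (m : {cmonom L}) : mpoly (size s) R := 'X_[rename_cmonom m].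

Lemma monom_rename_mmorph : mmorphism monom_rename.
Proof.
rewrite /monom_rename; split=> [m1 m2|]; rewrite -?mpolyX0 -?mpolyXD;
  by congr mpolyX; apply/mnmP => i; rewrite ?mnmDE ?mnm0E !mnmE ?cmM ?cm1.
Qed.

HB.instance Definition _ := isMultiplicative.Build _ _ _ monom_rename_mmorph.

Definition malg_rename : {malg R[{cmonom L}]} -> mpoly (size s) R :=
  monalg.mmap (@mpolyC _ R) monom_rename.

HB.instance Definition _ := GRing.RMorphism.on malg_rename.

Lemma malg_rename_eq0 (p : {malg R[{cmonom L}]}) :
  (forall m, m \in monalg.msupp p -> finsupp m `<=` S) -> malg_rename p = 0 -> p = 0.
Proof.
move=> suppS p0; apply/malgP => m; rewrite monalg.mcoeff0.
have [mp | /monalg.mcoeff_outdom //] := boolP (m \in monalg.msupp p).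
have := congr1 (mpoly.mcoeff (rename_cmonom m)) p0.
rewrite mcoeff0 /malg_rename monalg.mmapE raddf_sum /= (bigD1_seq m) ?fset_uniq //=.
rewrite mcoeffCM mcoeffX eqxx mulr1 big1 ?addr0 // => m' m'm.
rewrite mcoeffCM mcoeffX; case: eqP => [|_]; last by rewrite mulr0.
have [m'p /rename_cmonom_inj eqm|/monalg.mcoeff_outdom -> //] := boolP (m' \in monalg.msupp p).
  by rewrite eqm ?eqxx // in m'm; rewrite inE suppS.
by rewrite mul0r.
Qed.

Lemma malg_mul_eq0_supp (p q : {malg R[{cmonom L}]}) :
  (forall m, m \in monalg.msupp p `|` monalg.msupp q -> finsupp m `<=` S) ->
  p * q = 0 -> p = 0 \/ q = 0.
Proof.
move=> suppS /(congr1 malg_rename); rewrite rmorphM rmorph0.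
have suppP m : m \in monalg.msupp p -> finsupp m `<=` S.
  by move=> mp; apply: suppS; rewrite inE mp.
have suppQ m : m \in monalg.msupp q -> finsupp m `<=` S.
  by move=> mq; apply: suppS; rewrite inE mq orbT.
by case/mpoly_idomainAxiom/orP=> /eqP;
  [move/(malg_rename_eq0 suppP); left | move/(malg_rename_eq0 suppQ); right].
Qed.

End MalgDomain.

Lemma malg_cmonom_mul_eq0 (R : idomainType) (L : choiceType) (p q : {malg R[{cmonom L}]}) :
  p * q = 0 -> p = 0 \/ q = 0.
Proof.
apply: (malg_mul_eq0_supp (S := \big[fsetU/fset0]_(m <- msupp p `|` msupp q) finsupp m)).
by move=> m mpq; rewrite (big_fsetD1 m mpq) fsubsetUl.
Qed.

Lemma cmonom_nullary (J : choiceType) : (J -> False) -> forall m : {cmonom J}, m = mone.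
Proof. by move=> noJ m; apply/eqP/cmP => a; case: (noJ a). Qed.

Section CmonomEval.
Variables (J : choiceType) (S : comNzRingType) (phi : J -> S).

Definition cmonom_eval (m : {cmonom J}) : S := \prod_(a <- finsupp m) phi a ^+ m a.

Lemma cmonom_evalEw (m : {cmonom J}) (F : {fset J}) : finsupp m `<=` F ->
  cmonom_eval m = \prod_(a <- F) phi a ^+ m a.
Proof.
by move=> le; rewrite /cmonom_eval (big_fset_incl _ le) // => a _ /fsfun_dflt ->.
Qed.

Lemma cmonom_eval_mmorph : mmorphism cmonom_eval.
Proof.
split=> [m1 m2|]; last by rewrite /cmonom_eval mdom1 big_seq_fset0.
rewrite (cmonom_evalEw (fsubsetUl (finsupp m1) (finsupp m2))).
rewrite (cmonom_evalEw (fsubsetUr (finsupp m1) (finsupp m2))).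
rewrite (cmonom_evalEw (m := mmul m1 m2) (F := finsupp m1 `|` finsupp m2)) ?mdomD //.
by rewrite -big_split; apply: eq_bigr => a _; rewrite cmM exprD.
Qed.

HB.instance Definition _ := isMultiplicative.Build _ _ cmonom_eval cmonom_eval_mmorph.

Lemma cmonom_evalU (a : J) : cmonom_eval (ucm a) = phi a.
Proof. by rewrite /cmonom_eval mdomU big_seq_fset1 cmUU expr1. Qed.

End CmonomEval.

Lemma cmonom_eval_unique (J : choiceType) (S : comNzRingType) (h : {cmonom J} -> S) :
  mmorphism h -> h =1 cmonom_eval (h \o @ucm J).
Proof.
move=> [hM h1] m; move: {2}(mdeg m) (erefl (mdeg m)) => N.
elim: N m => [|N IH] m degm.
  by rewrite (mdeg_eq0I degm) h1 mmorph1.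
have /fset0Pn[a am] : finsupp m != fset0.
  by apply: contra_eqN degm; rewrite mdegE => /eqP ->; rewrite big_seq_fset0.
have em : m = mmul (ucm a) (divcm m (ucm a)).
  apply/eqP/cmP => i; rewrite cmM divcmE cmU.
  by case: eqP => [<-|_]; rewrite ?subn0 // subnKC // lt0n cmE_neq0.
rewrite em hM mmorphM; congr (_ * _); first by rewrite /= cmonom_evalU.
by apply: IH; move: degm; rewrite {1}em mdegM mdegU add1n => -[].
Qed.

Section Substitution.
Variables (k : comNzRingType) (J K : choiceType) (g : J -> {malg k[{cmonom K}]}).

Definition msubst : {malg k[{cmonom J}]} -> {malg k[{cmonom K}]} :=
  mmap (@malgC _ k) (cmonom_eval g).

HB.instance Definition _ := GRing.RMorphism.on msubst.

Lemma msubstE (p : {malg k[{cmonom J}]}) :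
  msubst p = \sum_(m <- msupp p) p@_m *: cmonom_eval g m.
Proof. by rewrite /msubst mmapE; apply: eq_bigr => m _; rewrite mul_malgC. Qed.

Lemma msubstZ (c : k) (p : {malg k[{cmonom J}]}) : msubst (c *: p) = c *: msubst p.
Proof. by rewrite -!mul_malgC /msubst rmorphM /= mmapC. Qed.

End Substitution.

Lemma cmonom_eval_ucm (k : comNzRingType) (J : choiceType) (m : {cmonom J}) :
  cmonom_eval (fun a => << ucm a >> : {malg k[{cmonom J}]}) m = << m >>.
Proof.
have mmorphU : mmorphism (fun m : {cmonom J} => << m >> : {malg k[{cmonom J}]}).
  by split=> [m1 m2|//]; rewrite malgM_def fgmulUU mulr1.
by rewrite [RHS](cmonom_eval_unique mmorphU).
Qed.

Lemma msubst_id (k : comNzRingType) (J : choiceType) (g : J -> {malg k[{cmonom J}]})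
    (p : {malg k[{cmonom J}]}) :
  (forall m a, m \in msupp p -> a \in finsupp m -> g a = << ucm a >>) -> msubst g p = p.
Proof.
move=> gU; rewrite msubstE [RHS]monalgE; apply: eq_big_seq => m mp.
have -> : cmonom_eval g m = << m >>.
  by rewrite -cmonom_eval_ucm; apply: eq_big_seq => a am; rewrite (gU m a).
by rewrite -mul_malgC malgM_def fgmulUU mulr1 mul1m.
Qed.

Lemma msubst_comp (k : comNzRingType) (J K L : choiceType)
    (g : J -> {malg k[{cmonom K}]}) (h : K -> {malg k[{cmonom L}]}) (p : {malg k[{cmonom J}]}) :
  msubst h (msubst g p) = msubst (msubst h \o g) p.
Proof.
rewrite [msubst g p]msubstE [RHS]msubstE raddf_sum; apply: eq_bigr => m _ /=.
rewrite msubstZ /cmonom_eval rmorph_prod; congr (_ *: _).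
by apply: eq_bigr => a _; rewrite rmorphXn.
Qed.

Definition lin_indep (k : fieldType) (K D : choiceType) (g : D -> {malg k[K]}) : Prop :=
  forall (s : seq D) (c : D -> k), uniq s ->
    \sum_(d <- s) c d *: g d = 0 -> forall d, d \in s -> c d = 0.

Section IndepExtension.
Variables (k : fieldType) (K D : choiceType) (g : D -> {malg k[K]}) (S : {fset D}).
Hypothesis g_indep : lin_indep g.

Let s := in_tuple (enum_fset S).
Let M := \bigcup_(d <- S) msupp (g d).
Let v := in_tuple (enum_fset M).

Let s_inj : injective (tnth s) := elimT (tuple_uniqP s) (fset_uniq S).
Let v_inj : injective (tnth v) := elimT (tuple_uniqP v) (fset_uniq M).

Let msupp_subM i : msupp (g (tnth s i)) `<=` M.
Proof. by rewrite /M (big_fsetD1 (tnth s i)) ?fsubsetUl ?mem_tnth. Qed.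

Definition coefmx : 'M[k]_(size s, size v) := \matrix_(i, j) (g (tnth s i))@_(tnth v j).

Lemma coefmx_row_free : row_free coefmx.
Proof.
apply: inj_row_free => u uC0.
pose c d := \sum_(i | tnth s i == d) u 0 i.
have cs i : c (tnth s i) = u 0 i.
  by rewrite /c (big_pred1 i) // => j; rewrite (inj_eq s_inj).
have : \sum_(d <- s) c d *: g d = 0.
  rewrite big_tuple; apply/malgP => m; rewrite raddf_sum mcoeff0 /=.
  under eq_bigr => i _ do rewrite mcoeffZ cs.
  have [mM | mNM] := boolP (m \in M).
    have /tnthP[j ->] : m \in (v : seq K) by [].
    have := congr1 (fun w : 'rV_(size v) => w 0 j) uC0; rewrite !mxE => uCj.
    by rewrite -[RHS]uCj; apply: eq_bigr => i _; rewrite mxE.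
  rewrite big1 // => i _; rewrite mcoeff_outdom ?mulr0 //.
  by apply: contra mNM; apply/fsubsetP/msupp_subM.
move/g_indep => /(_ (fset_uniq _)) c0.
by apply/matrixP => i j; rewrite ord1 mxE -cs c0 ?mem_tnth.
Qed.

Lemma indep_extension (V : lmodType k) (X : D -> V) :
  exists ell : K -> V,
    forall d, d \in S -> \sum_(m <- msupp (g d)) (g d)@_m *: ell m = X d.
Proof.
have [B CB] := row_freeP coefmx_row_free.
pose beta j := \sum_l B j l *: X (tnth s l).
exists (fun m => \sum_(j | tnth v j == m) beta j) => d dS.
have /tnthP[i ->] : d \in (s : seq D) by [].
rewrite (big_fset_incl _ (msupp_subM i)); last first.
  by move=> m _ /mcoeff_outdom ->; rewrite scale0r.
have ell_v j : \sum_(j' | tnth v j' == tnth v j) beta j' = beta j.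
  by rewrite (big_pred1 j) // => j'; rewrite (inj_eq v_inj).
rewrite big_tnth -/v; under eq_bigr => j _ do rewrite ell_v.
transitivity (\sum_l (coefmx *m B) i l *: X (tnth s l)).
  rewrite /beta; under eq_bigr => j _ do rewrite scaler_sumr.
  rewrite exchange_big; apply: eq_bigr => l _; rewrite mxE scaler_suml.
  by apply: eq_bigr => j _; rewrite mxE scalerA.
rewrite CB (bigD1 i) //= mxE eqxx scale1r big1 ?addr0 // => l li.
by rewrite mxE eq_sym (negbTE li) scale0r.
Qed.

End IndepExtension.

Lemma msubst_linear_poly (k : fieldType) (L K : choiceType)
    (ell : {cmonom L} -> {malg k[{cmonom K}]}) (f : Rpoly k L) :
  linear_poly f -> msubst (ell \o @ucm L) f = \sum_(m <- msupp f) f@_m *: ell m.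
Proof.
by move=> flin; rewrite msubstE; apply: eq_big_seq => m /flin[a ->]; rewrite cmonom_evalU.
Qed.

Lemma msubst_linear_indep_eq0 (k : fieldType) (L D : choiceType) (g : D -> Rpoly k L)
    (p : {malg k[{cmonom D}]}) :
  (forall d, linear_poly (g d)) -> lin_indep g -> msubst g p = 0 -> p = 0.
Proof.
move=> g_lin g_indep gp0.
have [ell ellP] := indep_extension (\bigcup_(m <- msupp p) finsupp m) g_indep
  (fun d => << ucm d >> : {malg k[{cmonom D}]}).
have <- : msubst (ell \o @ucm L) (msubst g p) = p.
  rewrite msubst_comp msubst_id // => m d mp dm /=.
  by rewrite msubst_linear_poly // ellP // (big_fsetD1 m mp) inE dm.
by rewrite gp0 rmorph0.
Qed.

Section MetabelianMatrixAlgebra.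
Variables (k : fieldType) (L I : choiceType).
Local Notation R := (Rpoly k L).
Local Notation T := (Tmod k L I).
Local Notation Mel := (Mel k L I).
Local Notation Mzero := (Mzero k L I).
Local Notation Mbr := (@Mbr k L I).

Lemma Tmod_scale_eq0 (r : R) (w : T) : r *: w = 0 -> r = 0 \/ w = 0.
Proof.
have [supp0 _|/fset0Pn[i wi]] := eqVneq (msupp w) fset0.
  by right; apply/malgP => i; rewrite mcoeff0 mcoeff_outdom // supp0.
move/(congr1 (mcoeff i)); rewrite mcoeffZ mcoeff0 => /malg_cmonom_mul_eq0[]; first by left.
by move/eqP; rewrite mcoeff_eq0 wi.
Qed.

Lemma Tmod_scale_expr_eq0 (r : R) n (w : T) : r != 0 -> r ^+ n *: w = 0 -> w = 0.
Proof.
move=> r_neq0; elim: n => [|n IHn]; first by rewrite expr0 scale1r.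
by rewrite exprS -scalerA => /Tmod_scale_eq0[/eqP|//]; rewrite (negPf r_neq0).
Qed.

Lemma scaler_cross_sub_eq0 (R' : comNzRingType) (V : lmodType R') (r f g : R') (u v w : V) :
  r *: u = f *: w -> r *: v = g *: w -> r *: (g *: u - f *: v) = 0.
Proof.
move=> ru rv; rewrite scalerBr !scalerA ![r * _]mulrC -!scalerA ru rv !scalerA.
by rewrite mulrC subrr.
Qed.

Lemma Mbr_vertl (w : T) (x : Mel) : Mbr (0, w) x = (0, x.1 *: w).
Proof. by rewrite /Mbr scale0r subr0. Qed.

Lemma Mbr_vertr (x : Mel) (w : T) : Mbr x (0, w) = (0, - x.1 *: w).
Proof. by rewrite /Mbr scale0r sub0r scaleNr. Qed.

Lemma foldr_Mbr_nseq (y : Mel) (w : T) n :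
  foldr Mbr (0, w) (nseq n y) = (0, (- y.1) ^+ n *: w).
Proof.
by elim: n => [|n /= ->]; rewrite ?expr0 ?scale1r // Mbr_vertr exprS scalerA.
Qed.

Lemma iter_Mbr (x : Mel) (w : T) n :
  iter n (fun y => Mbr y x) (0, w) = (0, x.1 ^+ n *: w).
Proof.
elim: n => [|n]; first by rewrite expr0 scale1r.
by rewrite iterS => ->; rewrite Mbr_vertl exprS scalerA.
Qed.

Lemma Mbr_vert_eq0 (x y : Mel) : x.1 = 0 -> y.1 = 0 -> Mbr x y = Mzero.
Proof. by case: x => _ w /= ->; rewrite Mbr_vertl => ->; rewrite scale0r. Qed.

Lemma Mbr_central_commute (a b y : Mel) : y.1 != 0 ->
  Mbr a y = Mzero -> Mbr b y = Mzero -> Mbr a b = Mzero.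
Proof.
move=> y1_neq0 /(congr1 snd)/subr0_eq ay /(congr1 snd)/subr0_eq by_.
case/Tmod_scale_eq0: (scaler_cross_sub_eq0 ay by_) => [/eqP|ab2].
  by rewrite (negPf y1_neq0).
by rewrite [Mbr a b]surjective_pairing /= ab2.
Qed.

Definition Mabelian (J : Mel -> Prop) : Prop :=
  forall x y, J x -> J y -> Mbr x y = Mzero.

Lemma abelian_nilpotent (J : Mel -> Prop) : Mabelian J -> nilpotent J.
Proof.
move=> abJ; exists 1%N => [[|x1 [|]]] // x _ Jxs Jx.
exact: abJ (Jxs x1 (mem_head _ _)) Jx.
Qed.

Lemma nilpotent_ideal_central (A J : Mel -> Prop) (a y : Mel) :
  ideal A J -> nilpotent J -> J y -> y.1 != 0 -> A a -> Mbr a y = Mzero.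
Proof.
move=> [_ _ JbrA] [n Jnil] Jy y1_neq0 Aa.
have Jnseq z : z \in nseq n y -> J z by rewrite mem_nseq => /andP[_ /eqP ->].
have := Jnil _ _ (size_nseq n y) Jnseq (JbrA a y Aa Jy).
rewrite [Mbr a y]surjective_pairing foldr_Mbr_nseq => -[] /Tmod_scale_expr_eq0 ay0.
by rewrite /Mbr /= ay0 // oppr_eq0.
Qed.

Lemma FitE (A K : Mel -> Prop) : ideal A K -> nilpotent K ->
    (forall J, ideal A J -> nilpotent J -> forall y, J y -> K y) ->
  forall x, Fit A x <-> K x.
Proof. by move=> idK nilK maxK x; split=> [|Kx K' _ maxK']; [apply | apply: maxK' Kx]. Qed.

Lemma Fit_abelian (A : Mel -> Prop) : subspace A -> Mabelian A ->
  forall x, Fit A x <-> A x.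
Proof.
move=> sA abA; apply: FitE; last by move=> J [_ JA _].
  by split=> // a x Aa Ax; rewrite abA //; case: sA.
exact: abelian_nilpotent.
Qed.

Lemma vert_ideal (A : Mel -> Prop) : subalgebraM0 A -> ideal A (fun x => A x /\ x.1 = 0).
Proof.
move=> [[A0 AD AZ] Abr _]; split=> [|x [] //|a x Aa [Ax _]]; last by split; [apply: Abr|].
split=> [//|x y [Ax x1] [Ay y1]|c x [Ax x1]]; split.
- exact: AD.
- by rewrite /= x1 y1 addr0.
- exact: AZ.
- by rewrite /= x1 scaler0.
Qed.

Lemma Fit_nonabelian (A : Mel -> Prop) : subalgebraM0 A -> ~ Mabelian A ->
  forall x, Fit A x <-> A x /\ x.1 = 0.
Proof.
move=> subA nabA; apply: FitE; first exact: vert_ideal.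
- by apply: abelian_nilpotent => x y [_ x1] [_ y1]; apply: Mbr_vert_eq0.
move=> J idJ nilJ y Jy; split; first by case: idJ => _ JA _; apply: JA.
have [//|y1_neq0] := eqVneq y.1 0; case: nabA => a b Aa Ab.
by apply: (Mbr_central_commute y1_neq0); apply: nilpotent_ideal_central idJ nilJ Jy y1_neq0 _.
Qed.

Lemma Mscale_eq0 (c : k) (x : Mel) : Mscale c x = Mzero -> c = 0 \/ x = Mzero.
Proof.
case: x => x1 x2 [/eqP]; rewrite scaler_eq0 => /orP[/eqP|/eqP ->]; first by left.
case/Tmod_scale_eq0 => [/eqP|->]; last by right.
by rewrite scaler_eq0 oner_eq0 orbF => /eqP; left.
Qed.

Section Family.
Variables (D : choiceType) (e : D -> Mel).

Lemma lincomb_fst (s : seq D) (c : D -> k) :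
  (lincomb e s c).1 = \sum_(d <- s) c d *: (e d).1.
Proof. by elim: s => [|d s /= ->]; rewrite ?big_nil ?big_cons. Qed.

Lemma lincomb_in (A : Mel -> Prop) (s : seq D) (c : D -> k) :
  subspace A -> (forall d, A (e d)) -> A (lincomb e s c).
Proof. by move=> [A0 AD AZ] Ae; elim: s => [|d s IHs] //=; apply: AD => //; apply: AZ. Qed.

Lemma act_monom_vert (m : {cmonom D}) (t : T) :
  act_monom e m (0, t) = (0, cmonom_eval (fun d => (e d).1) m *: t).
Proof.
rewrite /act_monom /cmonom_eval; elim: (enum_fset (finsupp m)) => [|d r /= ->].
  by rewrite big_nil scale1r.
by rewrite iter_Mbr big_cons scalerA.
Qed.

Lemma act_vert (t : T) (p : {malg k[{cmonom D}]}) :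
  act e (0, t) p = (0, msubst (fun d => (e d).1) p *: t).
Proof.
rewrite /act msubstE; elim: (enum_fset (msupp p)) => [|m r /= ->].
  by rewrite big_nil scale0r.
by rewrite act_monom_vert big_cons /Madd /Mscale /= scaler0 add0r scalerA mulr_algl scalerDl.
Qed.

Lemma act_nullary (b : Mel) (p : {malg k[{cmonom D}]}) :
  (D -> False) -> act e b p = Mscale p@_mone b.
Proof.
move=> noD; have one_cm := cmonom_nullary noD.
have act_monom_id m : act_monom e m b = b.
  by rewrite /act_monom; case: (enum_fset (finsupp m)) => [|d]; last case: (noD d).
have supp_p m : (m \in enum_fset (msupp p)) = (p@_m != 0) by rewrite mcoeff_neq0.
rewrite /act; move: (fset_uniq (msupp p)) supp_p.
case: (enum_fset (msupp p)) => [|m [|m' r]] uniq_p supp_p /=.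
- by have /negbFE/eqP -> := esym (supp_p mone); rewrite /Mscale !scale0r.
- by rewrite act_monom_id (one_cm m) /Madd /= !addr0.
- by move: uniq_p; rewrite (one_cm m) (one_cm m') /= inE eqxx.
Qed.

Lemma basis_mod_Fit_vert_indep (A : Mel -> Prop) : subspace A -> basis_mod_Fit e A ->
  (forall x, Fit A x <-> A x /\ x.1 = 0) -> lin_indep (fun d => (e d).1).
Proof.
move=> sA [Ae e_indep _] FitE s c s_uniq sum0; apply: e_indep => //.
by apply/FitE; split; [apply: lincomb_in | rewrite lincomb_fst].
Qed.

Lemma basis_mod_Fit_nullary (A : Mel -> Prop) : subspace A -> basis_mod_Fit e A ->
  (forall x, Fit A x <-> A x) -> D -> False.
Proof.
move=> sA [Ae e_indep _] FitE d.
have /eqP := e_indep [:: d] (fun=> 1) isT (proj2 (FitE _) (lincomb_in _ _ sA Ae)) d (mem_head _ _).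
by rewrite oner_eq0.
Qed.

End Family.

End MetabelianMatrixAlgebra.

Theorem lemma3p1p2 (k : fieldType) (L I D : choiceType)
    (A : Mel k L I -> Prop) (e : D -> Mel k L I) :
  subalgebraM0 A -> basis_mod_Fit e A ->
  (forall x y, Fit A x -> Fit A y -> Mbr x y = Mzero k L I) /\
  (forall (b : Mel k L I) (p : {malg k[{cmonom D}]}),
      Fit A b -> b <> Mzero k L I -> p <> 0%R -> act e b p <> Mzero k L I).
Proof.
move=> subA basis; have [sA _ A_lin] := subA; have [Ae _ _] := basis.
have [abA | nabA] := classic (Mabelian A).
  have FitA := Fit_abelian sA abA.
  have noD := basis_mod_Fit_nullary sA basis FitA.
  split=> [x y /FitA Ax /FitA Ay | b p _ b_neq0 p_neq0]; first exact: abA.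
  rewrite act_nullary // => /Mscale_eq0[p1_eq0|//]; apply: p_neq0.
  by apply/malgP => m; rewrite (cmonom_nullary noD m) p1_eq0 mcoeff0.
have FitZ := Fit_nonabelian subA nabA.
have e_indep := basis_mod_Fit_vert_indep sA basis FitZ.
split=> [x y /FitZ[_ x1] /FitZ[_ y1] | [b1 t] p /FitZ[_ /= b1_0] b_neq0 p_neq0].
  exact: Mbr_vert_eq0.
rewrite b1_0 act_vert => -[/Tmod_scale_eq0[/msubst_linear_indep_eq0 p0|t0]].
  by apply/p_neq0/p0 => // d; apply/A_lin/Ae.
by apply: b_neq0; rewrite b1_0 t0.
Qed.
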